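(* Let $a,b$ be nonzero complex numbers with $a\ne b$ and $a+b\neq0$, and let $n$ be a positive integer. Define $$f(a,b)=\lim_{x\to \frac{2ab}{a+b}}\frac{d^n}{dx^n}\,\frac{(x-a)^n(x-b)^n}{x^{n+1}}.$$ Then $f(a,b)=0$ if $n$ is odd, and if $n$ is even $$f(a,b)=(-1)^{n/2}(a-b)^n\left(\frac{a+b}{2ab}\right)^{n+1}\prod_{i=1}^{n/2}(2i-1)^2.$$ *)

From mathcomp Require Import all_boot all_algebra.
From mathcomp Require Import all_classical all_reals all_analysis.
From mathcomp Require Import complex.
Import GRing.Theory Num.Theory numFieldNormedType.Exports.
Local Open Scope ring_scope.

(* The complex numbers: R[i] for a real type R (complete archimedean
   ordered field), viewed as a numFieldType so that MathComp-Analysis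
   equips it with its modulus-norm topology; derivatives of functions
   CC R -> CC R are then complex derivatives. *)
Definition CC (R : realType) : numFieldType := R[i].

From mathcomp Require Import all_boot all_algebra.
From mathcomp Require Import all_classical all_reals all_analysis.
From mathcomp Require Import complex.
From mathcomp Require Import ring zify.
Import GRing.Theory Num.Theory numFieldNormedType.Exports.
Local Open Scope ring_scope.
Local Open Scope classical_set_scope.

(* Writing f(x) = P(x) / x^(n+1) with P = (X - a)^n (X - b)^n, every derivative
   of f is again of the form Q(x) / x^(n+1+k), and the coefficients of Q are
   those of P times explicit products of integers.  For k = n these products
   turn the numerator at x into (-1)^n n! times the n-th coefficient of the
   reciprocal polynomial s^(2n) P(x/s), shifted by s -> s + 1.  At
   x = 2ab/(a+b) that shifted polynomial is (ab s^2 + x^2 - ab)^n, whose middle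
   coefficient vanishes for odd n and is a central binomial coefficient for even
   n = 2k; the identity (2k)! C(2k,k) = 4^k (1 3 ... (2k-1))^2 then gives the
   closed form. *)

Section NumerDerivn.
Context {R : comNzRingType}.
Implicit Types (P : {poly R}) (m k : nat).

Fixpoint numer_derivn m k P : {poly R} :=
  if k is k'.+1 then
    'X * (numer_derivn m k' P)^`() - (m + k')%:R *: numer_derivn m k' P
  else P.

Lemma coef_numer_derivn m k P j :
  (numer_derivn m k P)`_j = P`_j * \prod_(i < k) (j%:R - (m + i)%:R).
Proof.
elim: k => [|k IH]; first by rewrite big_ord0 mulr1.
rewrite /= coefB coefZ coefXM coef_deriv big_ord_recr /=.
case: j IH => [|j] IH /=; rewrite IH; first by ring.
rewrite -mulr_natr; ring.
Qed.

Lemma size_numer_derivn m k P : (size (numer_derivn m k P) <= size P)%N.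
Proof.
by apply/leq_sizeP => j hj; rewrite coef_numer_derivn nth_default // mul0r.
Qed.

Lemma horner_numer_derivn m k P x N : (size P <= N)%N ->
  (numer_derivn m k P).[x] =
  \sum_(j < N) P`_j * \prod_(i < k) (j%:R - (m + i)%:R) * x ^+ j.
Proof.
move=> sPN; rewrite (@horner_coef_wide _ N); last first.
  exact: leq_trans (size_numer_derivn _ _ _) sPN.
by apply: eq_bigr => j _; rewrite coef_numer_derivn.
Qed.

End NumerDerivn.

Section DeriveRational.
Context {K : numFieldType}.
Implicit Types (P : {poly K}) (x : K).

Lemma near_neq0 x : x != 0 -> \forall y \near x, y != 0.
Proof. by move=> x_neq0; exact: (@cvgr_neq0 _ _ _ _ _ id _ cvg_id x_neq0). Qed.

Lemma is_derive_horner P x : is_derive x 1 (horner P) P^`().[x].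
Proof.
elim/poly_ind: P => [|P c IH].
  have -> : horner (0 : {poly K}) = cst 0 by apply/funext => y; rewrite horner0.
  by rewrite deriv0 horner0; exact: is_derive_cst.
have -> : horner (P * 'X + c%:P) = horner P * id + cst c.
  by apply/funext => y; rewrite hornerMXaddC.
apply: is_derive_eq; rewrite derivMXaddC !hornerE /=.
by rewrite [_%:A]mulr1 [_ *: _]mulrC.
Qed.

Lemma is_derive_poly_div_Xn P m x : x != 0 ->
  is_derive x 1 (fun y => P.[y] / y ^+ m)
    ((P^`().[x] * x - m%:R * P.[x]) / x ^+ m.+1).
Proof.
move=> x_neq0.
have Xm_neq0 : (@id K ^+ m) x != 0 by rewrite exprfctE expf_neq0.
have dinv : is_derive x 1 (fun y => ((@id K ^+ m) y)^-1)
    (- (x ^+ m) ^- 2 * (m%:R * x ^+ m.-1)).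
  apply: DeriveDef; first exact: derivableV.
  by rewrite deriveV // derive_val exprfctE scaler1.
have -> : (fun y => P.[y] / y ^+ m) = horner P * (fun y => ((@id K ^+ m) y)^-1).
  by apply/funext => y; rewrite exprfctE.
apply: is_derive_eq (is_deriveM (is_derive_horner P x) dinv) _.
rewrite exprfctE.
change (P.[x] * (- (x ^+ m) ^- 2 * (m%:R * x ^+ m.-1)) + (x ^+ m)^-1 * P^`().[x]
  = (P^`().[x] * x - m%:R * P.[x]) / x ^+ m.+1).
clear Xm_neq0 dinv; case: m => [|m]; first by rewrite !expr0 expr1; field.
have xm_neq0 : x ^+ m != 0 by rewrite expf_neq0.
by rewrite /= !exprS; field; rewrite xm_neq0 x_neq0.
Qed.
Lemma derivn_poly_div_Xn P m k x : x != 0 ->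
  (fun y => P.[y] / y ^+ m)^`(k) x = (numer_derivn m k P).[x] / x ^+ (m + k).
Proof.
elim: k x => [|k IH] x x_neq0; first by rewrite addn0.
rewrite derive1nS derive1E.
rewrite (near_eq_derive (g := fun y => (numer_derivn m k P).[y] / y ^+ (m + k))).
  rewrite (@derive_val _ _ _ _ _ _ _ (is_derive_poly_div_Xn _ _ _ x_neq0)).
  by rewrite addnS /= !hornerE [_ * x]mulrC.
near=> y; apply: IH; near: y; exact: near_neq0.
Unshelve. all: by end_near. Qed.

Lemma cvg_derivn_poly_div_Xn P m k x : x != 0 ->
  (fun y => P.[y] / y ^+ m)^`(k) y @[y --> x^'] -->
  (numer_derivn m k P).[x] / x ^+ (m + k).
Proof.
move=> x_neq0.
set g := fun y => (numer_derivn m k P).[y] / y ^+ (m + k).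
have g_cont : g y @[y --> x^'] --> g x.
  apply/continuous_withinNx/differentiable_continuous/derivable1_diffP.
  exact: (@ex_derive _ _ _ _ _ _ _ (is_derive_poly_div_Xn _ _ _ x_neq0)).
apply: cvg_trans g_cont; apply: near_eq_cvg; apply: cvg_within.
by near=> y; rewrite derivn_poly_div_Xn //; near: y; exact: near_neq0.
Unshelve. all: by end_near. Qed.

End DeriveRational.

Section Coefficients.
Context {R : comNzRingType}.
Implicit Types (P : {poly R}) (x : R).

Definition recip_poly x N P : {poly R} :=
  \poly_(i < N.+1) (P`_(N - i) * x ^+ (N - i)).

Lemma prod_natrB_ffact i n : \prod_(l < n) (i%:R - l%:R : R) = (i ^_ n)%:R.
Proof.
elim: n => [|n IH]; first by rewrite big_ord0 ffactn0.
rewrite big_ord_recr /= IH ffactnSr natrM.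
have [le_ni | lt_in] := leqP n i; first by rewrite natrB.
by rewrite ffact_small // !mul0r.
Qed.

Lemma coef_ZXaddC_exp (c d : R) n k :
  ((c *: 'X + d%:P) ^+ n)`_k = c ^+ k * d ^+ (n - k) *+ 'C(n, k).
Proof.
have -> : (c *: 'X + d%:P) ^+ n = \poly_(i < n.+1) (c ^+ i * d ^+ (n - i) *+ 'C(n, i)).
  rewrite addrC exprDn poly_def; apply: eq_bigr => i _.
  by rewrite exprZn -rmorphXn /= mul_polyC scalerA mulrC scalerMnl.
by rewrite coef_poly; case: ltnP => // lt_nk; rewrite bin_small.
Qed.

Lemma coef_comp_XaddC1 P k N : (size P <= N)%N ->
  (P \Po ('X + 1%:P))`_k = \sum_(i < N) P`_i * 'C(i, k)%:R.
Proof.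
move=> sPN; rewrite coef_comp_poly.
rewrite (big_ord_widen N (fun i => P`_i * (('X + 1%:P) ^+ i)`_k)) // big_mkcond.
apply: eq_bigr => i _; rewrite -[X in X + _]scale1r coef_ZXaddC_exp !expr1n mul1r -mulr_natr.
by case: ltnP => // le_Pi; rewrite nth_default ?mul0r.
Qed.

Lemma horner_numer_derivn_recip P n x : (size P <= (n + n).+1)%N ->
  (numer_derivn n.+1 n P).[x] =
  (-1) ^+ n * n`!%:R * ((recip_poly x (n + n) P) \Po ('X + 1%:P))`_n.
Proof.
move=> sP; rewrite (horner_numer_derivn _ _ _ _ _ sP).
rewrite (coef_comp_XaddC1 _ _ _ (size_poly _ _)) mulr_sumr.
rewrite (reindex_inj rev_ord_inj); apply: eq_bigr => i _ /=.
rewrite coef_poly ltn_ord subSS (reindex_inj rev_ord_inj) /=.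
have le_i2n : (i <= n + n)%N by rewrite -ltnS.
have reflect_factor l : (l < n)%N ->
    ((n + n - i)%N%:R - (n.+1 + (n - l.+1))%:R : R) = - (i%:R - l%:R).
  by move=> lt_ln; rewrite natrB // !natrD natrB //; ring.
under eq_bigr => l _ do rewrite reflect_factor //.
rewrite prodrN card_ord prod_natrB_ffact -bin_ffact natrM; ring.
Qed.

Lemma coef_mid_quadratic_exp (c d : R) n :
  ((c *: 'X^2 + d%:P) ^+ n)`_n =
  if odd n then 0 else (c * d) ^+ n./2 *+ 'C(n, n./2).
Proof.
have -> : (c *: 'X^2 + d%:P) ^+ n = (c *: 'X + d%:P) ^+ n \Po 'X^2.
  by rewrite rmorphXn /= comp_polyD comp_polyZ comp_polyX comp_polyC.
rewrite coef_comp_poly_Xn // dvdn2 divn2.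
have [// | even_n] := boolP (odd n).
rewrite coef_ZXaddC_exp; congr (_ *+ _).
have {2}<- : (n./2 + n./2 = n)%N.
  by rewrite addnn -[RHS]odd_double_half (negbTE even_n).
by rewrite addnK exprMn.
Qed.

End Coefficients.

Lemma poly_eq_on_nat (D : numDomainType) (p q : {poly D}) :
  (forall i : nat, p.[i%:R] = q.[i%:R]) -> p = q.
Proof.
move=> eq_pq; apply/eqP; rewrite -subr_eq0; apply/eqP.
apply: (@roots_geq_poly_eq0 _ _ [seq i%:R | i <- iota 0 (size (p - q))]).
- by apply/allP => _ /mapP [i _ ->]; rewrite /root hornerD hornerN eq_pq subrr.
- by rewrite map_inj_uniq ?iota_uniq // => i j /eqP; rewrite eqr_nat => /eqP.
- by rewrite size_map size_iota.
Qed.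

Section ReciprocalField.
Context {F : numFieldType}.
Implicit Types (P : {poly F}) (a b x s : F).

Lemma horner_recip_poly P N x s : (size P <= N.+1)%N -> s != 0 ->
  (recip_poly x N P).[s] = s ^+ N * P.[x / s].
Proof.
move=> sP s_neq0; rewrite horner_poly (@horner_coef_wide _ N.+1) // mulr_sumr.
rewrite (reindex_inj rev_ord_inj); apply: eq_bigr => i _ /=.
have le_iN : (i <= N)%N by rewrite -ltnS.
rewrite subSS subKn // exprB ?unitfE ?expf_neq0 // exprMn exprVn.
by field; rewrite expf_neq0.
Qed.

(* The condition x (a + b) = 2 a b, i.e. x is the harmonic mean of a and b,
   is exactly what kills the linear term. *)
Lemma recip_shift_quadratic a b x n : x * (a + b) = 2 * a * b ->
  recip_poly x (n + n) (('X - a%:P) ^+ n * ('X - b%:P) ^+ n) \Po ('X + 1%:P) =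
  ((a * b) *: 'X^2 + (x ^+ 2 - a * b)%:P) ^+ n.
Proof.
move=> hx; apply: poly_eq_on_nat => i.
have s_neq0 : (i%:R + 1 : F) != 0 by rewrite natr1 pnatr_eq0.
rewrite horner_comp hornerD hornerX hornerC horner_recip_poly; last 2 first.
- by rewrite (leq_trans (size_polyMleq _ _)) // !size_exp_XsubC addnS.
- exact: s_neq0.
rewrite hornerM !horner_exp !hornerXsubC exprD -mulrA -!exprMn.
rewrite hornerD hornerZ hornerC horner_exp hornerX; congr (_ ^+ n).
transitivity (x ^+ 2 - x * (a + b) * (i%:R + 1) + a * b * (i%:R + 1) ^+ 2).
  by field.
by rewrite hx; ring.
Qed.
End ReciprocalField.

Lemma fact_double k :
  (k.*2)`! = (2 ^ k * k`! * \prod_(1 <= i < k.+1) (2 * i - 1))%N.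
Proof.
elim: k => [|k IH]; first by rewrite big_geq.
rewrite doubleS !factS IH [in RHS]big_nat_recr //= expnS.
have -> : (2 * k.+1 - 1 = k.*2.+1)%N by lia.
rewrite -!muln2; ring.
Qed.

Lemma fact_double_bin_mid k :
  ((k.*2)`! * 'C(k.*2, k) = 2 ^ k.*2 * (\prod_(1 <= i < k.+1) (2 * i - 1)) ^ 2)%N.
Proof.
have := bin_fact (leq_addl k k); rewrite addnK addnn => bin_k.
apply/eqP; rewrite -(@eqn_pmul2r (k`! * k`!)) ?muln_gt0 ?fact_gt0 //.
by rewrite -mulnA bin_k fact_double -addnn expnD; apply/eqP; ring.
Qed.

Lemma numer_derivn_harmonic_mean (F : numFieldType) (a b : F) n :
  a != 0 -> b != 0 -> a + b != 0 ->
  (numer_derivn n.+1 n (('X - a%:P) ^+ n * ('X - b%:P) ^+ n)).[2 * a * b / (a + b)]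
    / (2 * a * b / (a + b)) ^+ (n.+1 + n) =
  (if odd n then 0
   else (-1) ^+ (n./2) * (a - b) ^+ n * ((a + b) / (2 * a * b)) ^+ n.+1
        * \prod_(1 <= i < (n./2).+1) ((2 * i - 1)%N%:R) ^+ 2).
Proof.
move=> a_neq0 b_neq0 ab_neq0.
set x0 := 2 * a * b / (a + b).
have x0_neq0 : x0 != 0 by rewrite !mulf_neq0 ?invr_eq0 ?pnatr_eq0.
rewrite horner_numer_derivn_recip; last first.
  by rewrite (leq_trans (size_polyMleq _ _)) // !size_exp_XsubC addnS.
rewrite recip_shift_quadratic ?divfK // coef_mid_quadratic_exp.
have [_ | even_n] := boolP (odd n); first by rewrite mulr0 mul0r.
have := odd_double_half n; rewrite (negbTE even_n) add0n.
move: n./2 => k <-; rewrite prodrXl -natr_prod.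
set D := (\prod_(1 <= i < k.+1) (2 * i - 1))%N.
have -> : a * b * (x0 ^+ 2 - a * b) = (-1) * ((a - b) * x0 / 2) ^+ 2.
  by rewrite /x0; field; rewrite ab_neq0.
have -> : (a + b) / (2 * a * b) = x0^-1 by rewrite invf_div.
clearbody x0.
have bin_neq0 : ('C(k.*2, k)%:R : F) != 0.
  by rewrite pnatr_eq0 -lt0n bin_gt0 -addnn leq_addr.
have fact_bin : ((k.*2)`!%:R * 'C(k.*2, k)%:R : F) = 2 ^+ k.*2 * D%:R ^+ 2.
  by rewrite -natrM fact_double_bin_mid natrM !natrX.
have -> : ((k.*2)`!%:R : F) = 2 ^+ k.*2 * D%:R ^+ 2 / 'C(k.*2, k)%:R.
  by rewrite -fact_bin mulfK.
have -> : (-1) ^+ k.*2 = 1 :> F by rewrite -mul2n exprM sqrrN !expr1n.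
have -> : x0 ^+ ((k.*2).+1 + k.*2) = x0 * x0 ^+ k.*2 * x0 ^+ k.*2.
  by rewrite addSn exprS exprD mulrA.
rewrite -[_ ^+ k *+ _]mulr_natr exprMn -exprM mul2n !exprMn [x0^-1 ^+ _]exprS !exprVn.
have t_neq0 : (2 : F) ^+ k.*2 != 0 by rewrite expf_neq0 ?pnatr_eq0.
move: (x0 ^+ k.*2) (expf_neq0 k.*2 x0_neq0) (2 ^+ k.*2) t_neq0 => y y_neq0 t t_neq0.
by field; rewrite y_neq0 t_neq0 x0_neq0 bin_neq0.
Qed.

Theorem lemma9 (R : realType) (n : nat) (a b : CC R) :
  a != 0 -> b != 0 -> a != b -> a + b != 0 -> (0 < n)%N ->
  ((fun x : CC R => (x - a) ^+ n * (x - b) ^+ n / x ^+ n.+1)^`(n)) x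
    @[x --> (2 * a * b / (a + b))^']
  --> (if odd n then 0
       else (-1) ^+ (n./2) * (a - b) ^+ n * ((a + b) / (2 * a * b)) ^+ n.+1
            * \prod_(1 <= i < (n./2).+1) ((2 * i - 1)%N%:R) ^+ 2).
Proof.
move=> a_neq0 b_neq0 _ ab_neq0 _.
rewrite -numer_derivn_harmonic_mean //.
have -> : (fun x : CC R => (x - a) ^+ n * (x - b) ^+ n / x ^+ n.+1) =
    (fun x => (('X - a%:P) ^+ n * ('X - b%:P) ^+ n).[x] / x ^+ n.+1).
  by apply/funext => x; rewrite hornerM !horner_exp !hornerXsubC.
by apply: cvg_derivn_poly_div_Xn; rewrite !mulf_neq0 ?invr_eq0 ?pnatr_eq0.
Qed.
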